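(* Let $S$ be a finite subdirectly indecomposable semigroup such that $\llbracket S\rrbracket$ is join irreducible and $S$ is of semisimple type (left letter mapping, right letter mapping, or group mapping). Then $\operatorname{Excl}(S)$ is large, i.e. $\mathbf{1}\mathbin{ⓜ}\operatorname{Excl}(S)=\operatorname{Excl}(S)$.
   Context: All semigroups are finite. A pseudovariety is a class of finite semigroups closed under finite direct products, subsemigroups and homomorphic images; $\llbracket S\rrbracket$ is the pseudovariety generated by $S$; $\mathbf{1}$ is the trivial pseudovariety. A pseudovariety $\mathbf{V}$ is join irreducible if for every set $\mathscr{X}$ of pseudovarieties, $\mathbf{V}\subseteq\bigvee\mathscr{X}$ implies $\mathbf{V}\subseteq\mathbf{X}$ for some $\mathbf{X}\in\mathscr{X}$; $\operatorname{Excl}(S)$ is the class of finite semigroups $T$ with $S\notin\llbracket T\rrbracket$ (a pseudovariety when $\llbracket S\rrbracket$ is join irreducible). The Mal'cev product $\mathbf{V}\mathbin{ⓜ}\mathbf{W}$ is the pseudovariety generated by all finite semigroups $S$ admitting a homomorphism $\varphi\colon S\to T$ with $T\in\mathbf{W}$ and $e\varphi^{-1}\in\mathbf{V}$ for every idempotent $e\in T$. A semigroup $S$ is subdirectly indecomposable if whenever $S$ is a subsemigroup of $S_1\times S_2$ projecting onto both factors, one of the projections is an isomorphism. Such a finite $S$ has a unique $0$-minimal ideal $I$ (the minimal ideal if $S$ has no zero). $S$ is left letter mapping if $S$ acts faithfully on the right of the set of $\mathscr L$-classes of $I$; right letter mapping if $S$ acts faithfully on the left of the set of $\mathscr R$-classes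 of $I$; group mapping if $I$ contains a nontrivial maximal subgroup and $S$ acts faithfully on both the left and the right of $I$. *)

From mathcomp Require Import all_boot.
Set Implicit Arguments. Unset Strict Implicit. Unset Printing Implicit Defensive.

Record fsg := FSG {
  car :> finType;
  sop : car -> car -> car;
  sassoc : associative sop }.

Definition surjective (A B : Type) (f : A -> B) : Prop := forall y, exists x, f x = y.

Definition is_hom (A B : fsg) (f : A -> B) : Prop :=
  forall x y : A, f (sop x y) = sop (f x) (f y).

Definition prod_op (A B : fsg) (x y : (A * B)%type) : (A * B)%type :=
  (sop x.1 y.1, sop x.2 y.2).
Lemma prod_assoc (A B : fsg) : associative (@prod_op A B).
Proof. by move=> [a b] [c d] [e g]; rewrite /prod_op /= !sassoc. Qed.
Definition fsg_prod (A B : fsg) : fsg := FSG (@prod_assoc A B).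

Definition unit_op (x y : unit) : unit := tt.
Lemma unit_assoc : associative unit_op. Proof. by []. Qed.
Definition fsg_unit : fsg := FSG unit_assoc.

Definition sclass := fsg -> Prop.

Definition sub_class (V W : sclass) : Prop := forall T, V T -> W T.

(** Pseudovariety: contains the one-element semigroup (empty product), closed
   under binary direct products, subsemigroups (injective homomorphisms into a
   member) and homomorphic images (surjective homomorphisms from a member). *)
Definition pseudovariety (V : sclass) : Prop :=
  [/\ V fsg_unit,
      (forall A B, V A -> V B -> V (fsg_prod A B)),
      (forall (T U : fsg) (f : T -> U), is_hom f -> injective f -> V U -> V T) &
      (forall (U T : fsg) (f : U -> T), is_hom f -> surjective f -> V U -> V T)].

Definition gen (C : sclass) : sclass :=
  fun T => forall V, pseudovariety V -> sub_class C V -> V T.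

Definition gen1 (S : fsg) : sclass := gen (fun T => exists f : S -> T,
  is_hom f /\ bijective f).

Definition trivialPV : sclass := fun T => #|T| = 1%N.

Definition join (X : sclass -> Prop) : sclass :=
  gen (fun T => exists2 V, X V & V T).

Definition join_irreducible (V : sclass) : Prop :=
  forall X : sclass -> Prop, (forall W, X W -> pseudovariety W) ->
    sub_class V (join X) -> exists2 W, X W & sub_class V W.

Definition Excl (S : fsg) : sclass := fun T => ~ gen1 T S.

Definition sub_in (V : sclass) (S : fsg) (A : pred S) : Prop :=
  exists U : fsg, V U /\ exists f : U -> S,
    [/\ is_hom f, injective f & forall x, A x <-> exists u, f u = x].

Definition malcev (V W : sclass) : sclass :=
  gen (fun S => exists T : fsg, W T /\ exists phi : S -> T, is_hom phi /\
         forall e : T, sop e e = e -> (exists s, phi s = e) ->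
           sub_in V (fun s => phi s == e)).

Definition subdirectly_indecomposable (S : fsg) : Prop :=
  forall (S1 S2 : fsg) (i : S -> fsg_prod S1 S2),
    is_hom i -> injective i ->
    surjective (fun s => (i s).1) -> surjective (fun s => (i s).2) ->
    bijective (fun s => (i s).1) \/ bijective (fun s => (i s).2).

Section Ideals.
Variable S : fsg.
Implicit Types (x y z : S) (I J : {set S}).

Definition is_zero z := forall x, sop z x = z /\ sop x z = z.
Definition has_zero := exists z, is_zero z.

Definition ideal I :=
  I != set0 /\ forall x s, x \in I -> sop x s \in I /\ sop s x \in I.

Definition minimal_ideal I := ideal I /\ forall J, ideal J -> J \subset I -> J = I.

Definition zero_minimal_ideal z I :=
  ideal I /\ I != [set z] /\
  forall J, ideal J -> J \subset I -> J = [set z] \/ J = I.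

Definition distinguished_ideal I :=
  (forall z, is_zero z -> zero_minimal_ideal z I) /\ (~ has_zero -> minimal_ideal I).

(** Green's relations (in S, via S^1) *)
Definition leL x y := x = y \/ exists u, x = sop u y.
Definition leR x y := x = y \/ exists u, x = sop y u.
Definition GL x y := leL x y /\ leL y x.
Definition GR x y := leR x y /\ leR y x.
Definition GH x y := GL x y /\ GR x y.

(** Left letter mapping: S acts faithfully on the right of the set of
   L-classes of I (action L_x . s = L_{xs}). *)
Definition left_letter_mapping :=
  exists I, distinguished_ideal I /\
    forall s t : S, (forall x, x \in I -> GL (sop x s) (sop x t)) -> s = t.

(** Right letter mapping: S acts faithfully on the left of the set of
   R-classes of I (action s . R_x = R_{sx}). *)
Definition right_letter_mapping :=
  exists I, distinguished_ideal I /\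
    forall s t : S, (forall x, x \in I -> GR (sop s x) (sop t x)) -> s = t.

(** Group mapping: I contains a nontrivial maximal subgroup (H-class of an
   idempotent), and S acts faithfully on both sides of I. *)
Definition group_mapping :=
  exists I, distinguished_ideal I /\
    [/\ (exists e, [/\ e \in I, sop e e = e & exists x, x != e /\ GH x e]),
        (forall s t : S, (forall x, x \in I -> sop x s = sop x t) -> s = t) &
        (forall s t : S, (forall x, x \in I -> sop s x = sop t x) -> s = t)].

Definition semisimple_type :=
  left_letter_mapping \/ right_letter_mapping \/ group_mapping.
End Ideals.

From mathcomp Require Import all_boot zify.
From Stdlib Require Import Classical.
Set Implicit Arguments. Unset Strict Implicit. Unset Printing Implicit Defensive.

(* 1 (m) Excl(S) is generated by the semigroups X having a morphism phi : X -> T,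
   T in Excl(S), that is injective on the preimage of every idempotent.  Join
   irreducibility makes Excl(S) a pseudovariety, so it suffices to show that S
   is not in [[X]].  The quotients of semigroups Y with such a morphism into a
   member of [[T]] form a pseudovariety containing X, so otherwise S = psi(Y)
   for such a phi : Y -> T'.  The image under psi of the kernel of phi is a
   symmetric compatible relation on S in which every idempotent absorbs whatever
   it is related to.  In a semigroup of semisimple type such a relation is the
   identity: the distinguished ideal I has a nonzero idempotent, hence is
   regular, which forces related elements of I to be L- and R-related and then
   equal; the faithful action of S on I spreads this to all of S.  Thus psi
   factors through phi and S lies in [[T]], a contradiction. *)

Section PseudovarietyFacts.
Variable V : sclass.
Hypothesis V_pv : pseudovariety V.

Lemma pv_unit : V fsg_unit.
Proof. by case: V_pv. Qed.

Lemma pv_prod A B : V A -> V B -> V (fsg_prod A B).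
Proof. by case: V_pv => _ hprod _ _; exact: hprod. Qed.

Lemma pv_sub (T U : fsg) (f : T -> U) : is_hom f -> injective f -> V U -> V T.
Proof. by case: V_pv => _ _ hsub _; exact: hsub. Qed.

Lemma pv_quo (U T : fsg) (f : U -> T) : is_hom f -> surjective f -> V U -> V T.
Proof. by case: V_pv => _ _ _ hquo; exact: hquo. Qed.
End PseudovarietyFacts.

Lemma gen_pseudovariety (C : sclass) : pseudovariety (gen C).
Proof.
split=> [V /pv_unit //|A B hA hB V hV hC|T U f hf fi hU V hV hC|U T f hf fs hU V hV hC].
- exact: pv_prod (hA V hV hC) (hB V hV hC).
- exact: pv_sub hf fi (hU V hV hC).
- exact: pv_quo hf fs (hU V hV hC).
Qed.

Lemma gen_incl (C : sclass) : sub_class C (gen C).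
Proof. by move=> T CT V _; apply. Qed.

Lemma gen_min (C V : sclass) : pseudovariety V -> sub_class C V -> sub_class (gen C) V.
Proof. by move=> V_pv CV T; apply. Qed.

Lemma gen1_pseudovariety (A : fsg) : pseudovariety (gen1 A).
Proof. exact: gen_pseudovariety. Qed.

Lemma gen1_refl (A : fsg) : gen1 A A.
Proof. by apply: gen_incl; exists id; split=> //; exists id. Qed.

Lemma gen1_min (V : sclass) (A : fsg) : pseudovariety V -> V A -> sub_class (gen1 A) V.
Proof.
move=> V_pv VA; apply: (gen_min V_pv) => T [f [hf [g fK gK]]].
by apply: (pv_quo V_pv hf _ VA) => y; exists (g y).
Qed.

Lemma gen1_trans (A B C : fsg) : gen1 A B -> gen1 B C -> gen1 A C.
Proof. by move=> AB; apply: (gen1_min (gen1_pseudovariety A) AB). Qed.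

Section Exclusion.
Variable S : fsg.
Hypothesis S_ji : join_irreducible (gen1 S).

Lemma join_irreducible_nontrivial : ~ gen1 fsg_unit S.
Proof.
move=> unitS; have no_pv (W : sclass) : False -> pseudovariety W by [].
have [|W []] := S_ji no_pv; apply: (gen1_min (gen_pseudovariety _)).
exact: (gen1_min (gen_pseudovariety _) (pv_unit (gen_pseudovariety _)) unitS).
Qed.

Lemma Excl_pseudovariety : pseudovariety (Excl S).
Proof.
split=> [|A B AS BS ABS|T U f hf fi US TS|U T f hf fs US TS].
- exact: join_irreducible_nontrivial.
- have X_pv W : W = gen1 A \/ W = gen1 B -> pseudovariety W.
    by case=> ->; exact: gen1_pseudovariety.
  have [|W [] -> WS] := S_ji X_pv;
    [|exact: AS (WS S (@gen1_refl S)) | exact: BS (WS S (@gen1_refl S))].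
  apply: (gen1_min (gen_pseudovariety _)); apply: (gen1_min (gen_pseudovariety _) _ ABS).
  apply: (pv_prod (gen_pseudovariety _)); apply: gen_incl.
  + by exists (gen1 A); [left | exact: (@gen1_refl A)].
  + by exists (gen1 B); [right | exact: (@gen1_refl B)].
- exact: US (gen1_trans (pv_sub (gen1_pseudovariety U) hf fi (@gen1_refl U)) TS).
- exact: US (gen1_trans (pv_quo (gen1_pseudovariety U) hf fs (@gen1_refl U)) TS).
Qed.
End Exclusion.

Section Subsemigroup.
Variables (Y : fsg) (P : pred Y).
Hypothesis P_mul : forall a b, P a -> P b -> P (sop a b).

Definition sub_op (a b : {y : Y | P y}) : {y : Y | P y} :=
  exist _ (sop (val a) (val b)) (P_mul (valP a) (valP b)).

Lemma sub_assoc : associative sub_op.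
Proof. by move=> a b c; apply: val_inj; exact: sassoc. Qed.

Definition subfsg : fsg := FSG sub_assoc.

Lemma gen1_subfsg : gen1 Y subfsg.
Proof.
have val_hom : is_hom (val : subfsg -> Y) by [].
exact: (pv_sub (gen1_pseudovariety Y) val_hom val_inj (@gen1_refl Y)).
Qed.
End Subsemigroup.

Section Powers.
Variable S : fsg.
Implicit Types x e : S.

(* [pow x n] is x^(n+1): a semigroup has no x^0. *)
Fixpoint pow x n : S := if n is n'.+1 then sop (pow x n') x else x.

Lemma pow_add x m n : sop (pow x m) (pow x n) = pow x (m + n).+1.
Proof.
elim: n => [|n IH] /=; first by rewrite addn0.
by rewrite sassoc IH addnS.
Qed.

Lemma pow_mulS x n : sop x (pow x n) = pow x n.+1.
Proof. by rewrite -[x in sop x _]/(pow x 0) pow_add add0n. Qed.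

Lemma pow_idem e n : sop e e = e -> pow e n = e.
Proof. by move=> ee; elim: n => //= n ->. Qed.

Lemma pow_periodic x i p : pow x i = pow x (i + p) ->
  forall m q, pow x (i + m + p * q) = pow x (i + m).
Proof.
move=> period; have shift m : pow x (i + m + p) = pow x (i + m).
  by elim: m => [|m IH]; rewrite ?addn0 -?period // addnS !addSn /= IH.
move=> m; elim=> [|q IH]; first by rewrite muln0 addn0.
have -> : i + m + p * q.+1 = i + (m + p * q) + p by lia.
by rewrite shift addnA IH.
Qed.

Lemma pow_idempotent x : exists n, sop (pow x n) (pow x n) = pow x n.
Proof.
have [i [j [lt_ij eq_ij]]] : exists i j, i < j /\ pow x i = pow x j.
  pose f (i : 'I_#|S|.+1) := pow x i.
  have /injectivePn [i [j ne_ij eq_ij]] : ~~ injectiveb f.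
    by apply/injectiveP => /leq_card; rewrite card_ord ltnn.
  case: (ltngtP i j) => [lt|lt|/val_inj eq]; first by exists i, j.
    by exists j, i.
  by rewrite eq eqxx in ne_ij.
have [k def_j] : exists k, j = i + k.+1 by exists (j - i).-1; lia.
(* x^((k+1)(i+1)) is idempotent, as its square lies a multiple of the period further. *)
rewrite def_j in eq_ij; have periodic := pow_periodic eq_ij.
exists (i + k * i.+1); rewrite pow_add -[RHS](periodic (k * i.+1) i.+1).
congr pow; lia.
Qed.
End Powers.

Lemma pow_hom (A B : fsg) (f : A -> B) : is_hom f -> forall x n, f (pow x n) = pow (f x) n.
Proof. by move=> hf x; elim=> //= n IH; rewrite hf IH. Qed.

Lemma zero_uniq (S : fsg) (z z' : S) : is_zero z -> is_zero z' -> z = z'.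
Proof. by move=> z0 z'0; case: (z0 z') => <- _; case: (z'0 z). Qed.

(* [option S] is the monoid S^1, [None] being the adjoined identity. *)
Definition mul1 (S : fsg) (u v : option S) : option S :=
  match u, v with
  | Some a, Some b => Some (sop a b)
  | Some a, None => Some a
  | None, v => v
  end.

Local Infix "**" := mul1 (at level 40, left associativity).

Section AdjoinedIdentity.
Variable S : fsg.
Implicit Types (x y z a c : S) (u v w : option S).

Lemma mul1A : associative (@mul1 S).
Proof. by case=> [a|] [b|] [c|] //=; rewrite sassoc. Qed.

Lemma mul1_Some u x v : exists a, Some a = u ** Some x ** v.
Proof. by case: u => [u|]; case: v => [v|]; eexists. Qed.

Lemma mul1_Somel u x : exists a, Some a = u ** Some x.
Proof. by case: u => [u|]; eexists. Qed.

Lemma mul1_none u : u ** None = u.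
Proof. by case: u. Qed.

Lemma zero_mul1 u z v : is_zero z -> u ** Some z ** v = Some z.
Proof.
by move=> z0; case: u => [u|]; case: v => [v|] //=; rewrite ?(z0 u).2 ?(z0 v).1.
Qed.

Lemma leLP x y : leL x y <-> exists u, Some x = u ** Some y.
Proof.
split=> [[->|[u ->]]|[[u|] [->]]];
  [by exists None | by exists (Some u) | by right; exists u | by left].
Qed.

Lemma leRP x y : leR x y <-> exists v, Some x = Some y ** v.
Proof.
split=> [[->|[v ->]]|[[v|] [->]]];
  [by exists None | by exists (Some v) | by right; exists v | by left].
Qed.

Lemma leL_trans x y z : leL x y -> leL y z -> leL x z.
Proof.
move=> /leLP [u xy] /leLP [v yz]; apply/leLP; exists (u ** v).
by rewrite xy yz mul1A.
Qed.
End AdjoinedIdentity.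

Definition generated_by_nonzero (S : fsg) (I : {set S}) :=
  forall c k, c \in I -> k \in I -> ~ is_zero k -> exists u v, Some c = u ** Some k ** v.

Definition has_nonzero_idempotent (S : fsg) (I : {set S}) :=
  exists e, [/\ e \in I, sop e e = e & ~ is_zero e].

Section Ideals.
Variables (S : fsg) (I : {set S}).
Implicit Types (x y c k : S) (u v : option S).

Lemma ideal_mulr x s : ideal I -> x \in I -> sop x s \in I.
Proof. by case=> _ closed /(closed x s)[]. Qed.

Lemma ideal_mull x s : ideal I -> x \in I -> sop s x \in I.
Proof. by case=> _ closed /(closed x s)[]. Qed.

Lemma ideal_mul1 u x v a : ideal I -> x \in I -> Some a = u ** Some x ** v -> a \in I.
Proof.
move=> I_ideal xI; case: u => [u|]; case: v => [v|] /= [->] //.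
- exact/(ideal_mulr _ I_ideal)/(ideal_mull _ I_ideal).
- exact: ideal_mull.
- exact: ideal_mulr.
Qed.

Lemma ideal_pow x n : ideal I -> x \in I -> pow x n \in I.
Proof. by move=> I_ideal xI; elim: n => //= n /(ideal_mulr x I_ideal). Qed.

Hypothesis I_dist : distinguished_ideal I.

Lemma distinguished_ideal_ideal : ideal I.
Proof.
case: I_dist => zmin min; have [[z z0]|no_zero] := classic (has_zero S).
  by case: (zmin z z0).
by case: (min no_zero).
Qed.

Lemma distinguished_ideal_generated : generated_by_nonzero I.
Proof.
move=> c k cI kI k_nz.
pose J := [set x | [exists u, exists v, Some x == u ** Some k ** v]].
have JP x : reflect (exists u v, Some x = u ** Some k ** v) (x \in J).
  rewrite inE; apply: (iffP existsP) => [[u /existsP [v /eqP]]|[u [v xJ]]].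
    by exists u, v.
  by exists u; apply/existsP; exists v; apply/eqP.
have kJ : k \in J by apply/JP; exists None, None.
have J_ideal : ideal J.
  split=> [|x s /JP [u [v xJ]]]; first by apply/set0Pn; exists k.
  split; apply/JP.
    by exists u, (v ** Some s); rewrite -[Some (sop x s)]/(Some x ** Some s) xJ !mul1A.
  by exists (Some s ** u), v; rewrite -[Some (sop s x)]/(Some s ** Some x) xJ !mul1A.
have JI : J \subset I.
  apply/subsetP => x /JP [u [v xJ]]; exact: ideal_mul1 distinguished_ideal_ideal kI xJ.
suff IJ : I = J by move: cI; rewrite IJ => /JP.
case: I_dist => zmin min; have [[z z0]|no_zero] := classic (has_zero S).
  have [_ [_ /(_ J J_ideal JI) [Jz|]]] := zmin z z0; last by [].
  by move: kJ; rewrite Jz inE => /eqP k_eq_z; rewrite k_eq_z in k_nz.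
by symmetry; apply: (min no_zero).2.
Qed.

Lemma distinguished_ideal_nonzero : exists2 c, c \in I & ~ is_zero c.
Proof.
case: I_dist => zmin min; have [[z z0]|no_zero] := classic (has_zero S).
  have [[/set0Pn [y yI] closed] [ne_z _]] := zmin z z0.
  apply: NNPP => all_zero; apply/(negP ne_z)/eqP/setP => x; rewrite inE.
  apply/idP/eqP => [xI|->].
    by apply: zero_uniq z0; apply: NNPP => x_nz; apply: all_zero; exists x.
  by case: (z0 y) => _ <-; case: (closed y z yI).
have [[/set0Pn [c cI] _] _] := min no_zero.
by exists c => // c0; apply: no_zero; exists c.
Qed.

Lemma null_ideal_zero_action :
  (forall x c, x \in I -> c \in I -> is_zero (sop x c)) ->
  exists c, [/\ ~ is_zero c, is_zero (sop c c) &
    forall x, x \in I -> sop x c = sop x (sop c c) /\ sop c x = sop (sop c c) x].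
Proof.
move=> null; have [c cI c_nz] := distinguished_ideal_nonzero.
have cc0 := null c c cI cI; exists c; split=> // x xI.
rewrite (zero_uniq (null x c xI cI) cc0) (zero_uniq (null c x cI xI) cc0).
by case: (cc0 x) => -> ->.
Qed.
End Ideals.

Section Stability.
Variable S : fsg.
Implicit Types (a c m : S) (u v : option S).

Lemma pow_fixes a c v : Some c = Some a ** Some c ** v ->
  exists n, sop (pow a n) (pow a n) = pow a n /\ sop (pow a n) c = c.
Proof.
move=> fix_c; have iter n : exists w, Some c = Some (pow a n) ** Some c ** w.
  elim: n => [|n [w IH]]; first by exists v.
  by exists (v ** w); rewrite {1}IH {1}fix_c !mul1A.
have [n idem] := pow_idempotent a; have [w fix_n] := iter n.
exists n; split=> //; apply: Some_inj.
rewrite -[Some (sop _ c)]/(Some (pow a n) ** Some c) fix_n !mul1A.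
by rewrite -[Some (pow a n) ** Some (pow a n)]/(Some (sop (pow a n) (pow a n))) idem.
Qed.

Lemma leL_pow_mul a n c : leL (sop (pow a n) c) (sop a c).
Proof. by case: n => [|n]; [left | right; exists (pow a n); rewrite /= sassoc]. Qed.

Lemma leL_stable c m u v : Some c = u ** Some (sop m c) ** v -> leL c (sop m c).
Proof.
move=> c_in_J; have [a def_a] := mul1_Somel u m.
have fix_c : Some c = Some a ** Some c ** v.
  by rewrite {1}c_in_J -[Some (sop m c)]/(Some m ** Some c) def_a !mul1A.
have [n [_ fixed]] := pow_fixes fix_c.
rewrite -{1}fixed; apply: leL_trans (leL_pow_mul _ _ _) _.
by apply/leLP; exists u; rewrite -[Some (sop a c)]/(Some a ** Some c) def_a -mul1A.
Qed.
End Stability.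

Section IdempotentsOfIdeal.
Variables (S : fsg) (I : {set S}).
Hypotheses (I_ideal : ideal I) (I_gen : generated_by_nonzero I).
Implicit Types (c x : S).

Lemma nonzero_idempotent_of_mul x c : x \in I -> c \in I -> ~ is_zero (sop x c) ->
  has_nonzero_idempotent I.
Proof.
move=> xI cI xc_nz; have xcI : sop x c \in I := ideal_mulr c I_ideal xI.
have [u [v c_in_J]] := I_gen cI xcI xc_nz.
have [a def_a] := mul1_Somel u x.
have aI : a \in I.
  by apply: (ideal_mul1 I_ideal xI (u := u) (v := None)); rewrite mul1_none.
have fix_c : Some c = Some a ** Some c ** v.
  by rewrite {1}c_in_J -[Some (sop x c)]/(Some x ** Some c) def_a !mul1A.
have [n [idem fixed]] := pow_fixes fix_c.
exists (pow a n); split=> //; first exact: ideal_pow.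
move=> e0; have c_eq : c = pow a n by rewrite -{1}fixed; case: (e0 c).
by apply: xc_nz; rewrite c_eq; case: (e0 x) => _ ->.
Qed.

Lemma nonzero_idempotent_or_null :
  has_nonzero_idempotent I \/ forall x c, x \in I -> c \in I -> is_zero (sop x c).
Proof.
have [[x [c [xI cI xc_nz]]]|null] :=
  classic (exists x c, [/\ x \in I, c \in I & ~ is_zero (sop x c)]).
  by left; exact: nonzero_idempotent_of_mul xI cI xc_nz.
by right=> x c xI cI; apply: NNPP => xc_nz; apply: null; exists x, c.
Qed.

Lemma L_regular c : has_nonzero_idempotent I -> c \in I -> exists f, sop f f = f /\ GL f c.
Proof.
move=> [e [eI ee e_nz]] cI; have [c0|c_nz] := classic (is_zero c).
  by exists c; split; [case: (c0 c) | split; left].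
(* From e = p c q, the element m = q e p satisfies m c m = m, so k = m c is an
   idempotent below c, and k is nonzero since e = p (c k) q. *)
have [p [q e_in_J]] := I_gen eI cI c_nz.
have [m def_m] := mul1_Some q e p.
have e_absorb w : p ** (Some c ** (q ** w)) = Some e ** w by rewrite e_in_J !mul1A.
have e_idem w : Some e ** (Some e ** w) = Some e ** w.
  by rewrite mul1A -[Some e ** Some e]/(Some (sop e e)) ee.
have mcm : sop m (sop c m) = m.
  apply: Some_inj; rewrite -[Some (sop m _)]/(Some m ** (Some c ** Some m)) def_m.
  by rewrite -!mul1A e_absorb !e_idem.
pose k := sop m c.
have kk : sop k k = k by rewrite /k sassoc -(sassoc m) mcm.
have kI : k \in I := ideal_mull m I_ideal cI.
have k_nz : ~ is_zero k.
  have e_eq : Some e = p ** Some (sop c k) ** q.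
    rewrite -[Some (sop c k)]/(Some c ** (Some m ** Some c)) def_m -!mul1A e_absorb e_idem.
    by rewrite [p ** _]mul1A -e_in_J -[Some e ** Some e]/(Some (sop e e)) ee.
  move=> k0; apply: e_nz; suff -> : e = k by [].
  by apply: Some_inj; rewrite e_eq (k0 c).2 zero_mul1.
have [u [v c_in_J]] := I_gen cI kI k_nz.
by exists k; split=> //; split; [right; exists m | exact: leL_stable c_in_J].
Qed.
End IdempotentsOfIdeal.

Definition absorbing_relation (S : fsg) (R : S -> S -> Prop) :=
  [/\ forall a b, R a b -> R b a,
      forall p a b, R a b -> R (sop p a) (sop p b) /\ R (sop a p) (sop b p) &
      forall a b, R a b -> sop a a = a -> sop a b = a /\ sop b a = a].

Section AbsorbingLeft.
Variables (S : fsg) (I : {set S}) (R : S -> S -> Prop).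
Hypotheses (I_ideal : ideal I) (I_gen : generated_by_nonzero I).
Hypotheses (I_idem : has_nonzero_idempotent I) (R_abs : absorbing_relation R).

Lemma absorbing_mul1l u a b a' b' :
  R a b -> Some a' = u ** Some a -> Some b' = u ** Some b -> R a' b'.
Proof.
case: R_abs => _ compat _ ab; case: u => [u|] [->] [->] //.
by case: (compat u a b ab).
Qed.

Lemma leL_absorbing c d : R c d -> c \in I -> leL c d.
Proof.
move=> cd cI; have [f [ff [/leLP [u fc] cf]]] := L_regular I_ideal I_gen I_idem cI.
have [g dg] := mul1_Somel u d.
have fg : sop f g = f.
  by case: R_abs => _ _ absorb; case: (absorb f g (absorbing_mul1l cd fc dg) ff).
apply: leL_trans cf _; apply/leLP; exists (Some f ** u).
by rewrite -{1}fg -[Some (sop f g)]/(Some f ** Some g) dg mul1A.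
Qed.
End AbsorbingLeft.

Lemma dual_assoc (S : fsg) : associative (fun x y : S => sop y x).
Proof. by move=> x y z; rewrite sassoc. Qed.

Definition dual (S : fsg) : fsg := FSG (@dual_assoc S).

Section Duality.
Variable S : fsg.
Implicit Types (x : S) (I : {set S}).

Lemma zero_dual x : is_zero (x : dual S) <-> is_zero x.
Proof. by split=> x0 y; case: (x0 y). Qed.

Lemma mul1_dual (u v : option S) : @mul1 (dual S) u v = v ** u.
Proof. by case: u => [u|]; case: v. Qed.

Lemma ideal_dual I : ideal I -> ideal (I : {set dual S}).
Proof. by case=> ne closed; split=> // x s /(closed x s)[]. Qed.

Lemma generated_dual I :
  generated_by_nonzero I -> generated_by_nonzero (I : {set dual S}).
Proof.
move=> gen c k cI kI /zero_dual k_nz; have [u [v c_in_J]] := gen c k cI kI k_nz.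
by exists v, u; rewrite !mul1_dual mul1A.
Qed.

Lemma nonzero_idempotent_dual I :
  has_nonzero_idempotent I -> has_nonzero_idempotent (I : {set dual S}).
Proof. by case=> e [eI ee e_nz]; exists e; split=> // /zero_dual. Qed.

Lemma absorbing_dual (R : S -> S -> Prop) :
  absorbing_relation R -> absorbing_relation (R : dual S -> dual S -> Prop).
Proof.
by case=> sym compat absorb; split=> // [p a b /(compat p)[]|a b /absorb ab /ab[]].
Qed.
End Duality.

Section AbsorbingIdeal.
Variables (S : fsg) (I : {set S}) (R : S -> S -> Prop).
Hypotheses (I_ideal : ideal I) (I_gen : generated_by_nonzero I).
Hypotheses (I_idem : has_nonzero_idempotent I) (R_abs : absorbing_relation R).

Lemma leR_absorbing c d : R c d -> c \in I -> leR c d.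
Proof.
exact: (leL_absorbing (ideal_dual I_ideal) (generated_dual I_gen)
  (nonzero_idempotent_dual I_idem) (absorbing_dual R_abs)).
Qed.

Lemma absorbing_ideal_eq c d : R c d -> c \in I -> d \in I -> c = d.
Proof.
(* With f = u c idempotent and L-equivalent to c (c = v f), the element u d is
   absorbed by f and R-below f, hence equals f; so d = v u d = v f = c. *)
move=> cd cI dI; case: (R_abs) => sym _ absorb.
have [f [ff [/leLP [u fc] /leLP [v cf]]]] := L_regular I_ideal I_gen I_idem cI.
have [g dg] := mul1_Somel u d.
have gI : g \in I by apply: (ideal_mul1 I_ideal dI (u := u) (v := None)); rewrite mul1_none.
have fg : R f g := absorbing_mul1l R_abs cd fc dg.
have g_eq_f : g = f.
  have /leRP [w gf] := leR_absorbing (sym _ _ fg) gI.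
  have [fg_f _] := absorb f g fg ff.
  apply: Some_inj; rewrite -fg_f -[Some (sop f g)]/(Some f ** Some g) gf mul1A.
  by rewrite -[Some f ** Some f]/(Some (sop f f)) ff.
have /leRP [w dc] := leR_absorbing (sym _ _ cd) dI.
have d_eq : Some d = v ** Some g by rewrite dg {2}dc [u ** _]mul1A -fc mul1A -cf -dc.
by apply: Some_inj; rewrite cf d_eq g_eq_f.
Qed.

Lemma absorbing_ideal_mul_eq a b x : R a b -> x \in I ->
  sop x a = sop x b /\ sop a x = sop b x.
Proof.
move=> ab xI; case: (R_abs) => _ compat _; have [xab axb] := compat x a b ab.
split; [apply: (absorbing_ideal_eq xab) | apply: (absorbing_ideal_eq axb)];
  by [exact: ideal_mulr | exact: ideal_mull].
Qed.
End AbsorbingIdeal.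

Section SemisimpleRigidity.
Variables (S : fsg) (R : S -> S -> Prop).
Hypothesis R_abs : absorbing_relation R.

Lemma left_letter_mapping_rigid a b : left_letter_mapping S -> R a b -> a = b.
Proof.
case=> I [I_dist faithful] ab; have I_ideal := distinguished_ideal_ideal I_dist.
have I_gen := distinguished_ideal_generated I_dist.
have I_idem : has_nonzero_idempotent I.
  have [//|/(null_ideal_zero_action I_dist) [c [c_nz cc0 same]]] :=
    nonzero_idempotent_or_null I_ideal I_gen.
  suff c_eq : c = sop c c by rewrite c_eq in c_nz.
  by apply: faithful => x /same[-> _]; split; left.
apply: faithful => x xI.
by have [-> _] := absorbing_ideal_mul_eq I_ideal I_gen I_idem R_abs ab xI; split; left.
Qed.

Lemma right_letter_mapping_rigid a b : right_letter_mapping S -> R a b -> a = b.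
Proof.
case=> I [I_dist faithful] ab; have I_ideal := distinguished_ideal_ideal I_dist.
have I_gen := distinguished_ideal_generated I_dist.
have I_idem : has_nonzero_idempotent I.
  have [//|/(null_ideal_zero_action I_dist) [c [c_nz cc0 same]]] :=
    nonzero_idempotent_or_null I_ideal I_gen.
  suff c_eq : c = sop c c by rewrite c_eq in c_nz.
  by apply: faithful => x /same[_ ->]; split; left.
apply: faithful => x xI.
by have [_ ->] := absorbing_ideal_mul_eq I_ideal I_gen I_idem R_abs ab xI; split; left.
Qed.

Lemma group_mapping_rigid a b : group_mapping S -> R a b -> a = b.
Proof.
case=> I [I_dist [[e [eI ee [x [ne_xe [[xe _] _]]]]] faithful _]] ab.
have I_idem : has_nonzero_idempotent I.
  exists e; split=> // e0; apply/(negP ne_xe)/eqP.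
  by case: xe => [->|[u ->]] //; case: (e0 u).
apply: faithful => y yI.
by have [-> _] := absorbing_ideal_mul_eq (distinguished_ideal_ideal I_dist)
  (distinguished_ideal_generated I_dist) I_idem R_abs ab yI.
Qed.

Lemma semisimple_rigid a b : semisimple_type S -> R a b -> a = b.
Proof.
case=> [|[]]; [exact: left_letter_mapping_rigid | exact: right_letter_mapping_rigid |
  exact: group_mapping_rigid].
Qed.
End SemisimpleRigidity.

Definition injective_over_idempotents (Y T : fsg) (phi : Y -> T) :=
  forall y y', phi y = phi y' -> sop (phi y) (phi y) = phi y -> y = y'.

Lemma malcev_trivial_injective (X T : fsg) (phi : X -> T) :
  (forall e, sop e e = e -> (exists s, phi s = e) ->
     sub_in trivialPV (fun s => phi s == e)) ->
  injective_over_idempotents phi.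
Proof.
move=> fibres y y' phi_yy' idem.
have [U [U1 [f [_ _ fibre]]]] := fibres _ idem (ex_intro _ y erefl).
have [u fu] := (fibre y).1 (eqxx _).
have [u' fu'] := (fibre y').1 (introT eqP (esym phi_yy')).
have [u0 all_u0] := fintype1 U1.
by rewrite -fu -fu' (all_u0 u) (all_u0 u').
Qed.

Lemma sub_malcev_trivial (V : sclass) : sub_class V (malcev trivialPV V).
Proof.
move=> T VT; apply: gen_incl; exists T; split=> //; exists id; split=> // e ee _.
exists fsg_unit; split; first by rewrite /trivialPV card_unit.
exists (fun _ => e); split=> [_ _|[] []//|x]; first by rewrite ee.
by split=> [/eqP ->|[_ ->]]; first exists tt.
Qed.

Definition one_malcev_images (T0 : fsg) : sclass := fun Z =>
  exists (Y T : fsg) (psi : Y -> Z) (phi : Y -> T),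
    [/\ is_hom psi, surjective psi, is_hom phi, gen1 T0 T & injective_over_idempotents phi].

Section OneMalcevImages.
Variable T0 : fsg.

Lemma one_malcev_images_sub (T U : fsg) (f : T -> U) :
  is_hom f -> injective f -> one_malcev_images T0 U -> one_malcev_images T0 T.
Proof.
move=> hf fi [Y [T' [psi [phi [hpsi spsi hphi T0T' iphi]]]]].
pose P y := [exists t, f t == psi y].
have P_mul a b : P a -> P b -> P (sop a b).
  move=> /existsP [ta /eqP fa] /existsP [tb /eqP fb]; apply/existsP.
  by exists (sop ta tb); rewrite hf fa fb hpsi.
pose pre (y : subfsg P_mul) : T := xchoose (existsP (valP y)).
have preK y : f (pre y) = psi (val y) := eqP (xchooseP (existsP (valP y))).
exists (subfsg P_mul), T', pre, (fun y => phi (val y)); split=> //.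
- by move=> a b; apply: fi; rewrite hf !preK hpsi.
- move=> t; have [y fy] := spsi (f t).
  have Py : P y by apply/existsP; exists t; rewrite fy.
  by exists (exist _ y Py); apply: fi; rewrite preK.
- by move=> a b; exact: hphi.
- by move=> a b /iphi ab /ab /val_inj.
Qed.

Lemma one_malcev_images_pseudovariety : pseudovariety (one_malcev_images T0).
Proof.
split=> [|A B|T U f|U T f hf fs [Y [T' [psi [phi [hpsi spsi hphi T0T' iphi]]]]]].
- exists fsg_unit, fsg_unit, id, id; split=> //; first by move=> y; exists y.
  exact: (pv_unit (gen1_pseudovariety T0)).
- move=> [Y1 [T1 [psi1 [phi1 [hpsi1 spsi1 hphi1 T0T1 iphi1]]]]].
  move=> [Y2 [T2 [psi2 [phi2 [hpsi2 spsi2 hphi2 T0T2 iphi2]]]]].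
  exists (fsg_prod Y1 Y2), (fsg_prod T1 T2), (fun y => (psi1 y.1, psi2 y.2)),
    (fun y => (phi1 y.1, phi2 y.2)); split.
  + by move=> [a1 a2] [b1 b2]; rewrite /= /prod_op /= hpsi1 hpsi2.
  + move=> [z1 z2]; have [y1 <-] := spsi1 z1; have [y2 <-] := spsi2 z2.
    by exists (y1, y2).
  + by move=> [a1 a2] [b1 b2]; rewrite /= /prod_op /= hphi1 hphi2.
  + exact: (pv_prod (gen1_pseudovariety T0)).
  + move=> [a1 a2] [b1 b2] /= [e1 e2] [i1 i2].
    by rewrite (iphi1 _ _ e1 i1) (iphi2 _ _ e2 i2).
- exact: one_malcev_images_sub.
- exists Y, T', (fun y => f (psi y)), phi; split=> //.
    by move=> a b; rewrite hpsi hf.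
  by move=> t; have [u <-] := fs t; have [y <-] := spsi u; exists y.
Qed.
End OneMalcevImages.

Section KernelImage.
Variables (Y S T : fsg) (psi : Y -> S) (phi : Y -> T).
Hypotheses (psi_hom : is_hom psi) (psi_onto : surjective psi) (phi_hom : is_hom phi).

Definition ker_image (a b : S) :=
  exists y y', [/\ psi y = a, psi y' = b & phi y = phi y'].

Lemma pow_absorbs_fibre y y' : injective_over_idempotents phi -> phi y = phi y' ->
  exists n, sop (pow y n) y' = pow y n.+1 /\ sop y' (pow y n) = pow y n.+1.
Proof.
move=> iphi yy'; have [m idem] := pow_idempotent (phi y).
have phi_idem :
    sop (phi (pow y (m + m).+1)) (phi (pow y (m + m).+1)) = phi (pow y (m + m).+1).
  by rewrite (pow_hom phi_hom) -pow_add idem.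
exists (m + m); split; symmetry; apply: (iphi _ _ _ phi_idem).
  by rewrite /= !phi_hom yy'.
by rewrite -(pow_mulS y) !phi_hom yy'.
Qed.

Lemma ker_image_absorbing : injective_over_idempotents phi -> absorbing_relation ker_image.
Proof.
move=> iphi; split.
- by move=> a b [y [y' [ya y'b yy']]]; exists y', y.
- move=> p a b [y [y' [<- <- yy']]]; have [q <-] := psi_onto p.
  split; [exists (sop q y), (sop q y') | exists (sop y q), (sop y' q)];
    by rewrite !psi_hom !phi_hom yy'.
- move=> a b [y [y' [<- <- yy']]] idem.
  have [n [fibre_l fibre_r]] := pow_absorbs_fibre iphi yy'.
  have pow_a k : psi (pow y k) = psi y by rewrite (pow_hom psi_hom) (pow_idem _ idem).
  split; [rewrite -{2}(pow_a n.+1) -fibre_l | rewrite -{2}(pow_a n.+1) -fibre_r];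
    by rewrite psi_hom pow_a.
Qed.

Lemma ker_image_trivial_gen1 : (forall a b, ker_image a b -> a = b) -> gen1 T S.
Proof.
move=> trivial; pose P t := [exists y, phi y == t].
have P_mul a b : P a -> P b -> P (sop a b).
  move=> /existsP [ya /eqP <-] /existsP [yb /eqP <-]; apply/existsP.
  by exists (sop ya yb); rewrite phi_hom.
pose pre (t : subfsg P_mul) : Y := xchoose (existsP (valP t)).
have preK t : phi (pre t) = val t := eqP (xchooseP (existsP (valP t))).
have factor y y' : phi y = phi y' -> psi y = psi y'.
  by move=> yy'; apply: trivial; exists y, y'.
apply: (pv_quo (gen1_pseudovariety T) (f := fun t => psi (pre t))) (gen1_subfsg P_mul).
- by move=> a b; rewrite -psi_hom; apply: factor; rewrite phi_hom !preK.
- move=> s; have [y <-] := psi_onto s.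
  have Py : P (phi y) by apply/existsP; exists y.
  by exists (exist P _ Py); apply: factor; rewrite preK.
Qed.
End KernelImage.

Lemma one_malcev_images_semisimple (T0 S : fsg) :
  semisimple_type S -> one_malcev_images T0 S -> gen1 T0 S.
Proof.
move=> S_ss [Y [T [psi [phi [hpsi spsi hphi T0T iphi]]]]].
apply: gen1_trans T0T (ker_image_trivial_gen1 hpsi spsi hphi _) => a b.
exact: semisimple_rigid (ker_image_absorbing hpsi spsi hphi iphi) a b S_ss.
Qed.

Theorem theorem4p2 (S : fsg) :
  subdirectly_indecomposable S ->
  join_irreducible (gen1 S) ->
  semisimple_type S ->
  forall T : fsg, malcev trivialPV (Excl S) T <-> Excl S T.
Proof.
move=> _ S_ji S_ss T; split; last exact: sub_malcev_trivial.
apply: (gen_min (Excl_pseudovariety S_ji)) => X [T0 [T0S [phi [hphi fibres]]]] XS.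
have X_image : one_malcev_images T0 X.
  exists X, T0, id, phi; split=> //; [by move=> x; exists x | exact: (@gen1_refl T0) |].
  exact: malcev_trivial_injective fibres.
apply: T0S (one_malcev_images_semisimple S_ss _).
exact: (gen1_min (one_malcev_images_pseudovariety T0) X_image XS).
Qed.
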